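(* Let $\alpha>0$ and $\kappa_l=l^{-\alpha}$. For even $N\ge4$ let $\gamma_\alpha(N)=\sum_{n=0}^{N-1}|f_N(k_n)|$ with $f_N(k)=2\sum_{l=1}^{N/2-1}l^{-\alpha}\sin(kl)+(N/2)^{-\alpha}$ and $k_n=(2n+1)\pi/N$. Then there exist constants $0<c\le C$ and $N_0$ (depending on $\alpha$) such that $c\,N\le\gamma_\alpha(N)\le C\,N$ for all even $N\ge N_0$. Consequently $I_0(\Delta)=[\gamma_\alpha(N)/2]^2T^2$ obeys Heisenberg scaling $\asymp T^2N^2$ for every $\alpha>0$; for power-law decay, super-Heisenberg scaling occurs only at $\alpha=0$.
   Context: $T>0$ is the probe time; $I_0(\Delta)=[\gamma_\alpha(N)/2]^2T^2$ is the optimally controlled quantum Fisher information for estimating the pairing strength $\Delta$ in the long-range Kitaev chain with decay law $\kappa_l$. *)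

From Stdlib Require Import Reals Lra Lia.
Open Scope R_scope.

Fixpoint sumR (f : nat -> R) (n : nat) : R :=
  match n with
  | O => 0
  | S m => sumR f m + f m
  end.

Definition kappa (alpha : R) (l : nat) : R := Rpower (INR l) (- alpha).

Definition fN (alpha : R) (N : nat) (k : R) : R :=
  2 * sumR (fun j => kappa alpha (S j) * sin (k * INR (S j))) (N / 2 - 1)
  + kappa alpha (N / 2).

Definition kn (N n : nat) : R := (2 * INR n + 1) * PI / INR N.

Definition gammaA (alpha : R) (N : nat) : R :=
  sumR (fun n => Rabs (fN alpha N (kn N n))) N.

Definition I0 (alpha : R) (N : nat) (T : R) : R :=
  (gammaA alpha N / 2) ^ 2 * T ^ 2.

From Stdlib Require Import Reals Lra Lia.
Open Scope R_scope.

(* Lower bound (any alpha).  |f| >= f sin k, and over the grid k_n = (2n+1) pi / N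
   the functions sin (l k) are orthogonal, so sum_n f_N(k_n) sin k_n = 2 kappa_1 N/2 = N.

   Upper bound (alpha > 0).  Summation by parts against the partial sine sums
   S_l(k) = sum_(j <= l) sin (j k), which satisfy |S_l| <= min(l, s) with
   s = 1/|sin(k/2)|, bounds |f_N(k)| by 2 sum_l kappa_(l+1) (min(l+1, s) - min(l, s)) + 1.
   The increment min(l+1, s) - min(l, s) vanishes unless s > l, which on the grid
   happens for at most about 2N/l points; the weights then give
   sum_l kappa_(l+1)/l <= 2/alpha by the decay step kappa_(l+1)/l <= (2/alpha) (kappa_l - kappa_(l+1)).
   Altogether N <= gamma_alpha(N) <= (4 + 8/alpha) N.

   Flat case (alpha = 0).  Here f_N(k_n) >= cot(k_n/2) >= N/(8(n+1)) on the first
   quarter of the grid, so gamma_0(N) >= (N/8) ln(N/4 + 1), which is superlinear. *)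

Lemma sumR_ext (f g : nat -> R) (n : nat) :
  (forall i, (i < n)%nat -> f i = g i) -> sumR f n = sumR g n.
Proof.
  induction n as [|n IH]; intros H; simpl; [reflexivity|].
  rewrite IH by (intros; apply H; lia). rewrite H by lia; reflexivity.
Qed.

Lemma sumR_le (f g : nat -> R) (n : nat) :
  (forall i, (i < n)%nat -> f i <= g i) -> sumR f n <= sumR g n.
Proof.
  induction n as [|n IH]; intros H; simpl; [lra|].
  apply Rplus_le_compat; [apply IH; intros; apply H; lia | apply H; lia].
Qed.

Lemma sumR_plus (f g : nat -> R) (n : nat) :
  sumR (fun i => f i + g i) n = sumR f n + sumR g n.
Proof. induction n as [|n IH]; simpl; [lra|]. rewrite IH; ring. Qed.

Lemma sumR_scal (c : R) (f : nat -> R) (n : nat) :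
  sumR (fun i => c * f i) n = c * sumR f n.
Proof. induction n as [|n IH]; simpl; [ring|]. rewrite IH; ring. Qed.

Lemma sumR_const (c : R) (n : nat) : sumR (fun _ => c) n = INR n * c.
Proof. induction n as [|n IH]; simpl sumR; [simpl; ring|]. rewrite IH, S_INR; ring. Qed.

Lemma sumR_abs (f : nat -> R) (n : nat) :
  Rabs (sumR f n) <= sumR (fun i => Rabs (f i)) n.
Proof.
  induction n as [|n IH]; simpl; [rewrite Rabs_R0; lra|].
  eapply Rle_trans; [apply Rabs_triang | lra].
Qed.

Lemma sumR_nonneg (f : nat -> R) (n : nat) :
  (forall i, (i < n)%nat -> 0 <= f i) -> 0 <= sumR f n.
Proof.
  intros H. replace 0 with (sumR (fun _ => 0) n) by (rewrite sumR_const; ring).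
  now apply sumR_le.
Qed.

Lemma sumR_tele (phi : nat -> R) (n : nat) :
  sumR (fun i => phi (S i) - phi i) n = phi n - phi O.
Proof. induction n as [|n IH]; simpl; [ring|]. rewrite IH; ring. Qed.

Lemma sumR_tele_le (h phi : nat -> R) (n : nat) :
  (forall i, (i < n)%nat -> h i <= phi (S i) - phi i) -> sumR h n <= phi n - phi O.
Proof. intros H. rewrite <- sumR_tele. now apply sumR_le. Qed.

Lemma sumR_swap (g : nat -> nat -> R) (N L : nat) :
  sumR (fun n => sumR (fun l => g n l) L) N = sumR (fun l => sumR (fun n => g n l) N) L.
Proof.
  induction N as [|N IH]; simpl.
  - rewrite sumR_const; simpl; ring.
  - rewrite IH, <- sumR_plus; reflexivity.
Qed.

Lemma sumR_split (f : nat -> R) (a b n : nat) :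
  n = (a + b)%nat -> sumR f n = sumR f a + sumR (fun i => f (a + i)%nat) b.
Proof.
  intros ->. induction b as [|b IH]; simpl.
  - rewrite Nat.add_0_r; ring.
  - rewrite Nat.add_succ_r; simpl. rewrite IH; ring.
Qed.

Lemma sumR_first (f : nat -> R) (n : nat) :
  sumR f (S n) = f O + sumR (fun i => f (S i)) n.
Proof. rewrite (sumR_split f 1 n) by lia. simpl; ring. Qed.

Lemma sumR_prefix (f : nat -> R) (K N : nat) :
  (K <= N)%nat -> (forall i, (i < N)%nat -> 0 <= f i) -> sumR f K <= sumR f N.
Proof.
  intros HK H. rewrite (sumR_split f K (N - K) N) by lia.
  assert (0 <= sumR (fun i => f (K + i)%nat) (N - K)) by (apply sumR_nonneg; intros; apply H; lia).
  lra.
Qed.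

Lemma abel_identity (a U : nat -> R) (L : nat) : U O = 0 ->
  sumR (fun l => a (S l) * (U (S l) - U l)) L
  = a L * U L + sumR (fun l => (a l - a (S l)) * U l) L.
Proof. intros H0. induction L as [|L IH]; simpl; [rewrite H0; ring|]. rewrite IH; ring. Qed.

Lemma abel_domination (a U m : nat -> R) (L : nat) :
  U O = 0 -> m O = 0 ->
  (forall l, 0 <= a l) -> (forall l, (1 <= l)%nat -> a (S l) <= a l) ->
  (forall l, Rabs (U l) <= m l) ->
  Rabs (sumR (fun l => a (S l) * (U (S l) - U l)) L)
  <= sumR (fun l => a (S l) * (m (S l) - m l)) L.
Proof.
  intros HU0 Hm0 Hpos Hdec Hdom.
  rewrite !abel_identity by assumption.
  eapply Rle_trans; [apply Rabs_triang|]. apply Rplus_le_compat.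
  - rewrite Rabs_mult, (Rabs_right (a L)) by (apply Rle_ge, Hpos).
    apply Rmult_le_compat_l; [apply Hpos | apply Hdom].
  - eapply Rle_trans; [apply sumR_abs|]. apply sumR_le. intros [|l] _.
    + rewrite HU0, Hm0, Rmult_0_r, Rabs_R0; lra.
    + assert (Hd : 0 <= a (S l) - a (S (S l))) by (pose proof (Hdec (S l) ltac:(lia)); lra).
      rewrite Rabs_mult, (Rabs_right (a (S l) - a (S (S l)))) by lra.
      apply Rmult_le_compat_l; [lra | apply Hdom].
Qed.

Lemma sum_cos_odd (th : R) (N : nat) :
  2 * sin th * sumR (fun n => cos ((2 * INR n + 1) * th)) N = sin (2 * INR N * th).
Proof.
  induction N as [|N IH]; simpl sumR.
  - simpl INR. replace (2 * 0 * th) with 0 by ring. rewrite sin_0; ring.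
  - rewrite Rmult_plus_distr_l, IH, S_INR.
    replace (2 * INR N * th) with ((2 * INR N + 1) * th - th) by ring.
    replace (2 * (INR N + 1) * th) with ((2 * INR N + 1) * th + th) by ring.
    rewrite sin_minus, sin_plus; ring.
Qed.

Lemma sum_sin_odd (th : R) (N : nat) :
  2 * sin th * sumR (fun n => sin ((2 * INR n + 1) * th)) N = 1 - cos (2 * INR N * th).
Proof.
  induction N as [|N IH]; simpl sumR.
  - simpl INR. replace (2 * 0 * th) with 0 by ring. rewrite cos_0; ring.
  - rewrite Rmult_plus_distr_l, IH, S_INR.
    replace (2 * INR N * th) with ((2 * INR N + 1) * th - th) by ring.
    replace (2 * (INR N + 1) * th) with ((2 * INR N + 1) * th + th) by ring.
    rewrite cos_minus, cos_plus; ring.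
Qed.

Lemma sin_frac_PI_pos (j N : nat) :
  (1 <= j)%nat -> (j < N)%nat -> 0 < sin (INR j * PI / INR N).
Proof.
  intros Hj HN. pose proof PI_RGT_0.
  assert (1 <= INR j) by (apply (le_INR 1); lia).
  assert (INR j < INR N) by (apply lt_INR; lia).
  apply sin_gt_0.
  - apply Rdiv_lt_0_compat; nra.
  - apply (Rmult_lt_reg_r (INR N)); [lra|].
    unfold Rdiv. rewrite Rmult_assoc, Rinv_l by lra. nra.
Qed.

Lemma grid_cos_sum (N j : nat) :
  (1 <= j)%nat -> (j < N)%nat -> sumR (fun n => cos (INR j * kn N n)) N = 0.
Proof.
  intros Hj HN. set (th := INR j * PI / INR N).
  assert (HNp : 0 < INR N) by (apply lt_0_INR; lia).
  pose proof (sin_frac_PI_pos j N Hj HN) as Hth. fold th in Hth.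
  rewrite (sumR_ext _ (fun n => cos ((2 * INR n + 1) * th)))
    by (intros; unfold th, kn; f_equal; field; lra).
  apply (Rmult_eq_reg_l (2 * sin th)); [|lra].
  rewrite sum_cos_odd, Rmult_0_r.
  replace (2 * INR N * th) with (0 + 2 * INR j * PI) by (unfold th; field; lra).
  rewrite sin_period; apply sin_0.
Qed.

Lemma grid_sin_sum (N : nat) : (2 <= N)%nat -> sumR (fun n => sin (kn N n)) N = 0.
Proof.
  intros HN. set (th := INR 1 * PI / INR N).
  assert (HNp : 0 < INR N) by (apply lt_0_INR; lia).
  pose proof (sin_frac_PI_pos 1 N (le_n 1) HN) as Hth. fold th in Hth.
  rewrite (sumR_ext _ (fun n => sin ((2 * INR n + 1) * th)))
    by (intros; unfold th, kn; simpl INR; f_equal; field; lra).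
  apply (Rmult_eq_reg_l (2 * sin th)); [|lra].
  rewrite sum_sin_odd, Rmult_0_r.
  replace (2 * INR N * th) with (2 * PI) by (unfold th; simpl INR; field; lra).
  rewrite cos_2PI; ring.
Qed.

Lemma grid_orthogonality (N l : nat) :
  (1 <= l)%nat -> (l + 1 < N)%nat ->
  sumR (fun n => sin (kn N n * INR l) * sin (kn N n)) N
  = if Nat.eq_dec l 1 then INR N / 2 else 0.
Proof.
  intros Hl HN.
  rewrite (sumR_ext _ (fun n => / 2 * cos (INR (l - 1) * kn N n)
                               + - / 2 * cos (INR (l + 1) * kn N n))).
  2:{ intros n _. rewrite minus_INR, plus_INR by lia. simpl INR.
      replace ((INR l - 1) * kn N n) with (kn N n * INR l - kn N n) by ring.
      replace ((INR l + 1) * kn N n) with (kn N n * INR l + kn N n) by ring.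
      rewrite cos_minus, cos_plus; field. }
  rewrite sumR_plus, !sumR_scal, (grid_cos_sum N (l + 1)) by lia.
  destruct (Nat.eq_dec l 1) as [->|Hl1].
  - rewrite (sumR_ext _ (fun _ => 1)) by (intros; simpl INR; rewrite Rmult_0_l; apply cos_0).
    rewrite sumR_const; field.
  - rewrite (grid_cos_sum N (l - 1)) by lia; ring.
Qed.

Lemma kappa_pos (a : R) (l : nat) : 0 < kappa a l.
Proof. unfold kappa, Rpower. apply exp_pos. Qed.

Lemma kappa_one (a : R) : kappa a 1 = 1.
Proof. unfold kappa, Rpower. simpl INR. rewrite ln_1, Rmult_0_r. apply exp_0. Qed.

Lemma kappa_flat (l : nat) : kappa 0 l = 1.
Proof. unfold kappa, Rpower. rewrite Ropp_0, Rmult_0_l. apply exp_0. Qed.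

Lemma ln_le_sub1 (x : R) : 0 < x -> ln x <= x - 1.
Proof. intros Hx. pose proof (exp_ineq1_le (ln x)). rewrite exp_ln in H by exact Hx. lra. Qed.

Lemma ln_ge_1_sub_inv (x : R) : 0 < x -> 1 - / x <= ln x.
Proof.
  intros Hx. pose proof (ln_le_sub1 (/ x) (Rinv_0_lt_compat x Hx)).
  rewrite ln_Rinv in H by exact Hx. lra.
Qed.

(* The decay step that makes sum_l kappa_(l+1) / l converge:
   kappa_(l+1) / l <= (2 / alpha) (kappa_l - kappa_(l+1)). *)
Lemma kappa_decay_step (a : R) (l : nat) :
  0 < a -> (1 <= l)%nat -> kappa a (S l) / INR l <= 2 / a * (kappa a l - kappa a (S l)).
Proof.
  intros Ha Hl. assert (H1 : 1 <= INR l) by (apply (le_INR 1); exact Hl).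
  set (d := ln (INR l + 1) - ln (INR l)).
  assert (Hratio : kappa a l = kappa a (S l) * exp (a * d)).
  { unfold kappa, Rpower, d. rewrite <- exp_plus, S_INR. f_equal; ring. }
  assert (Hd : / (2 * INR l) <= d).
  { pose proof (ln_ge_1_sub_inv ((INR l + 1) / INR l) ltac:(apply Rdiv_lt_0_compat; lra)).
    unfold Rdiv in H. rewrite ln_mult, ln_Rinv in H by (try apply Rinv_0_lt_compat; lra).
    replace (/ ((INR l + 1) * / INR l)) with (INR l / (INR l + 1)) in H by (field; lra).
    apply Rle_trans with (1 - INR l / (INR l + 1)); [|unfold d; lra].
    apply (Rmult_le_reg_r (2 * INR l * (INR l + 1))); [nra|].
    replace (/ (2 * INR l) * (2 * INR l * (INR l + 1))) with (INR l + 1) by (field; lra).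
    replace ((1 - INR l / (INR l + 1)) * (2 * INR l * (INR l + 1))) with (2 * INR l) by (field; lra).
    lra. }
  assert (Hexp : 1 + a * d <= exp (a * d)) by apply exp_ineq1_le.
  pose proof (kappa_pos a (S l)) as Hk.
  assert (Hgap : kappa a (S l) * (a * / (2 * INR l)) <= kappa a l - kappa a (S l)).
  { rewrite Hratio. assert (a * / (2 * INR l) <= a * d) by (apply Rmult_le_compat_l; lra). nra. }
  apply (Rmult_le_reg_l (a / 2)); [lra|].
  replace (a / 2 * (2 / a * (kappa a l - kappa a (S l)))) with (kappa a l - kappa a (S l)) by (field; lra).
  replace (a / 2 * (kappa a (S l) / INR l)) with (kappa a (S l) * (a * / (2 * INR l))) by (field; lra).
  exact Hgap.
Qed.

Lemma kappa_decr (a : R) (l : nat) : 0 < a -> (1 <= l)%nat -> kappa a (S l) <= kappa a l.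
Proof.
  intros Ha Hl. pose proof (kappa_decay_step a l Ha Hl). pose proof (kappa_pos a (S l)).
  assert (1 <= INR l) by (apply (le_INR 1); exact Hl).
  assert (0 <= kappa a (S l) / INR l) by (unfold Rdiv; apply Rmult_le_pos; [lra | left; apply Rinv_0_lt_compat; lra]).
  assert (0 < 2 / a) by (apply Rdiv_lt_0_compat; lra). nra.
Qed.

Lemma kappa_le1 (a : R) (l : nat) : 0 < a -> (1 <= l)%nat -> kappa a l <= 1.
Proof.
  intros Ha Hl. induction l as [|l IH]; [lia|].
  destruct (Nat.eq_dec l 0) as [->|Hl0]; [rewrite kappa_one; lra|].
  pose proof (kappa_decr a l Ha ltac:(lia)). specialize (IH ltac:(lia)). lra.
Qed.

Lemma kappa_harmonic_tail (a : R) (L : nat) :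
  0 < a -> sumR (fun i => kappa a (S (S i)) / INR (S i)) L <= 2 / a.
Proof.
  intros Ha. eapply Rle_trans.
  - apply (sumR_tele_le _ (fun i => - (2 / a) * kappa a (S i))).
    intros i _. pose proof (kappa_decay_step a (S i) Ha ltac:(lia)). lra.
  - rewrite kappa_one. pose proof (kappa_pos a (S L)).
    assert (0 < 2 / a) by (apply Rdiv_lt_0_compat; lra). nra.
Qed.

(** Lower bound: the correlation of f_N with sin k over the grid is N. *)

Lemma half_double (M : nat) : ((2 * M) / 2 = M)%nat.
Proof. rewrite Nat.mul_comm. apply Nat.div_mul. lia. Qed.

(* Only the l = 1 harmonic of f_N survives, with weight 2 kappa_1 (N/2) = N;
   the constant term is killed by the vanishing grid sum of sin k. *)
Lemma grid_correlation (a : R) (M : nat) : (2 <= M)%nat ->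
  sumR (fun n => fN a (2 * M) (kn (2 * M) n) * sin (kn (2 * M) n)) (2 * M) = INR (2 * M).
Proof.
  intros HM. set (N := (2 * M)%nat).
  unfold fN. replace (N / 2)%nat with M by (symmetry; apply half_double).
  rewrite (sumR_ext _ (fun n => 2 * sumR (fun l => kappa a (S l)
                 * (sin (kn N n * INR (S l)) * sin (kn N n))) (M - 1)
               + kappa a M * sin (kn N n))).
  2:{ intros n _. rewrite Rmult_plus_distr_r, Rmult_assoc. f_equal. f_equal.
      rewrite Rmult_comm, <- sumR_scal. apply sumR_ext; intros; ring. }
  rewrite sumR_plus, sumR_scal, sumR_swap, sumR_scal, grid_sin_sum by (unfold N; lia).
  rewrite (sumR_ext _ (fun l => kappa a (S l) * (if Nat.eq_dec (S l) 1 then INR N / 2 else 0))).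
  2:{ intros l Hl. rewrite sumR_scal, grid_orthogonality by (unfold N; lia). reflexivity. }
  replace (M - 1)%nat with (S (M - 2)) by lia.
  rewrite sumR_first, (sumR_ext _ (fun _ => 0)) by (intros; simpl; ring).
  rewrite sumR_const, kappa_one. simpl. field.
Qed.

(* N <= gamma_alpha(N), since |f| >= f sin k pointwise. *)
Lemma gamma_lower (a : R) (M : nat) : (2 <= M)%nat -> INR (2 * M) <= gammaA a (2 * M).
Proof.
  intros HM. rewrite <- (grid_correlation a M HM). unfold gammaA. apply sumR_le.
  intros n _. set (f := fN a (2 * M) (kn (2 * M) n)).
  pose proof (SIN_bound (kn (2 * M) n)).
  eapply Rle_trans; [apply Rle_abs|]. rewrite Rabs_mult.
  assert (Rabs (sin (kn (2 * M) n)) <= 1) by (apply Rabs_le; lra).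
  pose proof (Rabs_pos f). nra.
Qed.

(** Upper bound, pointwise: summation by parts against the partial sine sums. *)

Definition partialSin (k : R) (l : nat) : R := sumR (fun j => sin (k * INR (S j))) l.

Lemma partialSin_closed (k : R) (l : nat) :
  2 * sin (k / 2) * partialSin k l = cos (k / 2) - cos ((INR l + 1 / 2) * k).
Proof.
  induction l as [|l IH]; unfold partialSin in *; cbn [sumR] in *.
  - simpl INR. replace ((0 + 1 / 2) * k) with (k / 2) by field. ring.
  - rewrite Rmult_plus_distr_l, IH.
    replace ((INR l + 1 / 2) * k) with (k * INR (S l) - k / 2) by (rewrite S_INR; field).
    replace ((INR (S l) + 1 / 2) * k) with (k * INR (S l) + k / 2) by (rewrite S_INR; field).
    rewrite cos_minus, cos_plus; ring.
Qed.

Lemma partialSin_le_count (k : R) (l : nat) : Rabs (partialSin k l) <= INR l.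
Proof.
  unfold partialSin. eapply Rle_trans; [apply sumR_abs|].
  rewrite <- (Rmult_1_r (INR l)), <- sumR_const. apply sumR_le.
  intros j _. pose proof (SIN_bound (k * INR (S j))). apply Rabs_le; lra.
Qed.

Lemma partialSin_le_csc (k : R) (l : nat) :
  sin (k / 2) <> 0 -> Rabs (partialSin k l) <= / Rabs (sin (k / 2)).
Proof.
  intros Hs. assert (Hp : 0 < Rabs (sin (k / 2))) by (apply Rabs_pos_lt; exact Hs).
  assert (H2 : Rabs (2 * sin (k / 2) * partialSin k l) <= 2).
  { rewrite partialSin_closed. eapply Rle_trans; [apply Rabs_triang|]. rewrite Rabs_Ropp.
    pose proof (COS_bound (k / 2)). pose proof (COS_bound ((INR l + 1 / 2) * k)).
    assert (Rabs (cos (k / 2)) <= 1) by (apply Rabs_le; lra).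
    assert (Rabs (cos ((INR l + 1 / 2) * k)) <= 1) by (apply Rabs_le; lra). lra. }
  rewrite !Rabs_mult, (Rabs_right 2) in H2 by lra.
  apply (Rmult_le_reg_l (Rabs (sin (k / 2)))); [exact Hp|].
  rewrite Rinv_r by lra. lra.
Qed.

Definition rampInc (s : R) (l : nat) : R := Rmin (INR (S l)) s - Rmin (INR l) s.

Lemma rampInc_bounds (s : R) (l : nat) : 0 <= s -> 0 <= rampInc s l <= 1.
Proof. intros Hs. unfold rampInc, Rmin. rewrite S_INR. pose proof (pos_INR l).
  repeat destruct Rle_dec; lra. Qed.

Lemma fN_abel_bound (a : R) (M : nat) (k : R) :
  0 < a -> (1 <= M)%nat -> sin (k / 2) <> 0 ->
  Rabs (fN a (2 * M) k)
  <= 2 * sumR (fun l => kappa a (S l) * rampInc (/ Rabs (sin (k / 2))) l) (M - 1) + 1.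
Proof.
  intros Ha HM Hs. unfold fN. rewrite half_double.
  set (s := / Rabs (sin (k / 2))).
  assert (Hs0 : 0 < s) by (apply Rinv_0_lt_compat, Rabs_pos_lt; exact Hs).
  assert (Hsum : Rabs (sumR (fun j => kappa a (S j) * sin (k * INR (S j))) (M - 1))
                 <= sumR (fun l => kappa a (S l) * rampInc s l) (M - 1)).
  { rewrite (sumR_ext _ (fun l => kappa a (S l) * (partialSin k (S l) - partialSin k l)))
      by (intros; unfold partialSin; cbn [sumR]; ring).
    apply (abel_domination (kappa a) (partialSin k) (fun l => Rmin (INR l) s)).
    - reflexivity.
    - simpl INR. apply Rmin_left; lra.
    - intros; left; apply kappa_pos.
    - intros; apply kappa_decr; assumption.
    - intros l. apply Rmin_glb; [apply partialSin_le_count | apply partialSin_le_csc; exact Hs]. }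
  pose proof (kappa_le1 a M Ha HM). pose proof (kappa_pos a M).
  eapply Rle_trans; [apply Rabs_triang|].
  rewrite Rabs_mult, (Rabs_right 2), (Rabs_right (kappa a M)) by lra. lra.
Qed.

Lemma sin_lower_third (y : R) : 0 < y -> y <= PI / 2 -> y / 3 <= sin y.
Proof.
  intros Hy0 Hy1. pose proof PI_4. pose proof PI_RGT_0.
  destruct (sin_bound y 0) as [Hb _]; [lra | lra |].
  replace (sin_approx y (2 * 0 + 1)) with (y - y * y * y / 6) in Hb
    by (unfold sin_approx, sin_term; simpl; field).
  assert (y * y <= 4) by nra. nra.
Qed.

(* 1/|sin(k_n/2)|, the scale beyond which the partial sine sums stop growing. *)
Definition cscHalf (N n : nat) : R := / Rabs (sin (kn N n / 2)).

Lemma sin_half_grid_pos (N n : nat) : (n < N)%nat -> 0 < sin (kn N n / 2).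
Proof.
  intros Hn. pose proof PI_RGT_0. pose proof (pos_INR n).
  assert (INR (S n) <= INR N) by (apply le_INR; lia). rewrite S_INR in H1.
  replace (kn N n / 2) with ((2 * INR n + 1) * PI / (2 * INR N)) by (unfold kn; field; lra).
  apply sin_gt_0.
  - apply Rdiv_lt_0_compat; nra.
  - apply (Rmult_lt_reg_r (2 * INR N)); [lra|].
    replace ((2 * INR n + 1) * PI / (2 * INR N) * (2 * INR N)) with ((2 * INR n + 1) * PI)
      by (field; lra). nra.
Qed.

Lemma cscHalf_pos (N n : nat) : (n < N)%nat -> 0 < cscHalf N n.
Proof.
  intros Hn. apply Rinv_0_lt_compat, Rabs_pos_lt, Rgt_not_eq, sin_half_grid_pos; exact Hn.
Qed.

Lemma cscHalf_le (N n : nat) (p : R) : 0 < p <= INR N ->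
  sin (kn N n / 2) = sin (p * PI / (2 * INR N)) -> cscHalf N n * p <= 2 * INR N.
Proof.
  intros Hp Heq. pose proof PI_RGT_0. pose proof PI2_3_2.
  set (y := p * PI / (2 * INR N)).
  assert (Hy0 : 0 < y) by (unfold y; apply Rdiv_lt_0_compat; nra).
  assert (Hy1 : y <= PI / 2).
  { unfold y. apply (Rmult_le_reg_r (2 * INR N)); [lra|].
    replace (p * PI / (2 * INR N) * (2 * INR N)) with (p * PI) by (field; lra).
    replace (PI / 2 * (2 * INR N)) with (INR N * PI) by (field; lra). nra. }
  assert (Hsin : p / (2 * INR N) <= sin y).
  { eapply Rle_trans; [|apply sin_lower_third; assumption]. unfold y.
    apply (Rmult_le_reg_r (2 * INR N)); [lra|].
    replace (p / (2 * INR N) * (2 * INR N)) with p by (field; lra).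
    replace (p * PI / (2 * INR N) / 3 * (2 * INR N)) with (p * (PI / 3)) by (field; lra). nra. }
  assert (0 < p / (2 * INR N)) by (apply Rdiv_lt_0_compat; lra).
  unfold cscHalf. rewrite Heq. fold y. rewrite Rabs_right by lra.
  apply (Rmult_le_reg_l (sin y)); [lra|].
  rewrite <- Rmult_assoc, Rinv_r by lra.
  apply (Rmult_le_compat_r (2 * INR N)) in Hsin; [|lra].
  replace (p / (2 * INR N) * (2 * INR N)) with p in Hsin by (field; lra). lra.
Qed.

(* A ramp increment at a point with s (2m+1) <= x is dominated by a unit step
   of the ramp min(., x/(2l) + 1/2) at m; these steps telescope. *)
Lemma rampInc_le_step (l : nat) (s m x : R) : (1 <= l)%nat -> 0 <= m -> 0 <= s ->
  s * (2 * m + 1) <= x ->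
  rampInc s l <= Rmin (m + 1) (x / (2 * INR l) + 1 / 2) - Rmin m (x / (2 * INR l) + 1 / 2).
Proof.
  intros Hl Hm Hs Hx. assert (H1 : 1 <= INR l) by (apply (le_INR 1); exact Hl).
  set (c := x / (2 * INR l) + 1 / 2).
  destruct (Rle_dec s (INR l)) as [Hsl|Hsl].
  - unfold rampInc. rewrite S_INR, !Rmin_right by lra.
    pose proof (Rle_min_compat_r m (m + 1) c ltac:(lra)). lra.
  - assert (Hmc : m + 1 < c).
    { unfold c. apply (Rmult_lt_reg_r (2 * INR l)); [lra|].
      replace ((x / (2 * INR l) + 1 / 2) * (2 * INR l)) with (x + INR l) by (field; lra). nra. }
    rewrite !Rmin_left by lra. pose proof (rampInc_bounds s l Hs). lra.
Qed.

(* Counting: for l >= 1 at most about 2N/l grid points have 1/|sin(k_n/2)| > l. *)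
Lemma grid_rampInc_sum (M l : nat) : (1 <= l)%nat ->
  sumR (fun n => rampInc (cscHalf (2 * M) n) l) (2 * M) <= 2 * INR (2 * M) / INR l + 1.
Proof.
  intros Hl. set (N := (2 * M)%nat).
  assert (HN : INR N = 2 * INR M) by (unfold N; rewrite mult_INR; reflexivity).
  assert (H1 : 1 <= INR l) by (apply (le_INR 1); exact Hl).
  set (c := 2 * INR N / (2 * INR l) + 1 / 2).
  assert (Hc : 0 <= c).
  { unfold c, Rdiv. pose proof (pos_INR N).
    assert (0 < / (2 * INR l)) by (apply Rinv_0_lt_compat; lra). nra. }
  assert (Hcsc : forall n, (n < N)%nat -> 0 <= cscHalf N n) by (intros; left; apply cscHalf_pos; assumption).
  rewrite (sumR_split _ M M N) by (unfold N; lia).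
  assert (Hfirst : sumR (fun n => rampInc (cscHalf N n) l) M <= c).
  { eapply Rle_trans; [apply (sumR_tele_le _ (fun n => Rmin (INR n) c))|].
    - intros n Hn. rewrite S_INR. pose proof (pos_INR n).
      apply rampInc_le_step; [exact Hl | lra | apply Hcsc; unfold N; lia |].
      assert (INR (S n) <= INR M) by (apply le_INR; lia). rewrite S_INR in H0.
      apply cscHalf_le; [split; lra | f_equal; unfold kn; field; lra].
    - simpl INR. rewrite (Rmin_left 0) by lra. pose proof (Rmin_r (INR M) c). lra. }
  assert (Hsecond : sumR (fun i => rampInc (cscHalf N (M + i)) l) M <= c).
  { eapply Rle_trans; [apply (sumR_tele_le _ (fun i => - Rmin (INR (M - i)) c))|].
    - intros i Hi. pose proof (pos_INR (M - S i)) as HmS.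
      assert (HMi : INR (M - i) = INR (M - S i) + 1) by (rewrite <- S_INR; f_equal; lia).
      rewrite HMi.
      replace (- Rmin (INR (M - S i)) c - - Rmin (INR (M - S i) + 1) c)
        with (Rmin (INR (M - S i) + 1) c - Rmin (INR (M - S i)) c) by ring.
      apply rampInc_le_step; [exact Hl | lra | apply Hcsc; unfold N; lia |].
      assert (Hm : INR (M - S i) = INR M - INR i - 1) by (rewrite minus_INR, S_INR by lia; ring).
      assert (HiM : INR i + 1 <= INR M) by (rewrite <- S_INR; apply le_INR; lia).
      pose proof (pos_INR i). rewrite Hm. apply cscHalf_le; [split; lra|].
      rewrite <- sin_PI_x. f_equal. unfold kn. rewrite plus_INR, HN. field. lra.
    - rewrite Nat.sub_0_r, Nat.sub_diag. simpl INR. rewrite (Rmin_left 0) by lra.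
      pose proof (Rmin_r (INR M) c). lra. }
  unfold c in *. replace (2 * INR N / INR l) with (2 * (2 * INR N / (2 * INR l))) by (field; lra).
  lra.
Qed.

(* Weighting the counts by kappa_(l+1): the l = 0 term costs at most N, the
   others at most 2N kappa_(l+1)/l + 1, which sum to 4N/alpha + L. *)
Lemma grid_weighted_ramp (a : R) (M L : nat) : 0 < a ->
  sumR (fun l => kappa a (S l) * sumR (fun n => rampInc (cscHalf (2 * M) n) l) (2 * M)) (S L)
  <= INR (2 * M) + 4 * INR (2 * M) / a + INR L.
Proof.
  intros Ha. set (N := (2 * M)%nat). rewrite sumR_first, kappa_one.
  assert (Hzero : sumR (fun n => rampInc (cscHalf N n) 0) N <= INR N).
  { rewrite <- (Rmult_1_r (INR N)), <- sumR_const. apply sumR_le. intros n Hn.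
    apply rampInc_bounds. left; apply cscHalf_pos; exact Hn. }
  assert (Htail : sumR (fun i => kappa a (S (S i)) * sumR (fun n => rampInc (cscHalf N n) (S i)) N) L
                  <= 2 * INR N * sumR (fun i => kappa a (S (S i)) / INR (S i)) L + INR L).
  { rewrite <- sumR_scal, <- (Rmult_1_r (INR L)), <- sumR_const, <- sumR_plus.
    apply sumR_le. intros i _.
    pose proof (grid_rampInc_sum M (S i) ltac:(lia)) as Hcount. fold N in Hcount.
    pose proof (kappa_pos a (S (S i))). pose proof (kappa_le1 a (S (S i)) Ha ltac:(lia)).
    assert (1 <= INR (S i)) by (apply (le_INR 1); lia).
    apply Rle_trans with (kappa a (S (S i)) * (2 * INR N / INR (S i) + 1));
      [apply Rmult_le_compat_l; lra|].
    replace (kappa a (S (S i)) * (2 * INR N / INR (S i) + 1))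
      with (2 * INR N * (kappa a (S (S i)) / INR (S i)) + kappa a (S (S i))) by (field; lra).
    lra. }
  pose proof (kappa_harmonic_tail a L Ha). pose proof (pos_INR N).
  assert (2 * INR N * sumR (fun i => kappa a (S (S i)) / INR (S i)) L <= 2 * INR N * (2 / a))
    by (apply Rmult_le_compat_l; lra).
  replace (4 * INR N / a) with (2 * INR N * (2 / a)) by (field; lra). lra.
Qed.

Lemma gamma_upper (a : R) (M : nat) : 0 < a -> (2 <= M)%nat ->
  gammaA a (2 * M) <= (4 + 8 / a) * INR (2 * M).
Proof.
  intros Ha HM. set (N := (2 * M)%nat). unfold gammaA.
  eapply Rle_trans.
  { apply sumR_le. intros n Hn. apply (fN_abel_bound a M (kn N n) Ha ltac:(lia)).
    apply Rgt_not_eq, sin_half_grid_pos; exact Hn. }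
  rewrite (sumR_ext _ (fun n => 2 * sumR (fun l => kappa a (S l) * rampInc (cscHalf N n) l) (M - 1) + 1))
    by (intros; reflexivity).
  rewrite sumR_plus, sumR_const, sumR_scal, sumR_swap.
  rewrite (sumR_ext _ (fun l => kappa a (S l) * sumR (fun n => rampInc (cscHalf N n) l) N))
    by (intros; apply sumR_scal).
  replace (M - 1)%nat with (S (M - 2)) by lia.
  pose proof (grid_weighted_ramp a M (M - 2) Ha) as Hweighted. fold N in Hweighted.
  assert (HL : INR (2 * (M - 2)) <= INR N) by (apply le_INR; unfold N; lia).
  rewrite mult_INR in HL. simpl (INR 2) in HL.
  replace ((4 + 8 / a) * INR N) with (4 * INR N + 2 * (4 * INR N / a)) by (field; lra).
  lra.
Qed.

(** The flat case alpha = 0: gamma_0(N) grows like N ln N. *)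

Lemma fN_flat_grid (M n : nat) : (1 <= M)%nat ->
  sin (kn (2 * M) n / 2) * fN 0 (2 * M) (kn (2 * M) n)
  = cos (kn (2 * M) n / 2)
    + sin (kn (2 * M) n / 2) * (1 - sin (INR M * kn (2 * M) n)).
Proof.
  intros HM. set (k := kn (2 * M) n).
  assert (HMp : 0 < INR M) by (apply lt_0_INR; lia).
  assert (Hf : fN 0 (2 * M) k = 2 * partialSin k (M - 1) + 1).
  { unfold fN. rewrite half_double, kappa_flat. unfold partialSin. f_equal. f_equal.
    apply sumR_ext. intros; rewrite kappa_flat; ring. }
  assert (Hcos : cos (INR M * k) = 0).
  { apply cos_eq_0_1. exists (Z.of_nat n). rewrite <- INR_IZR_INZ.
    unfold k, kn. rewrite mult_INR. simpl (INR 2). field. lra. }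
  pose proof (partialSin_closed k (M - 1)) as Hclosed.
  replace ((INR (M - 1) + 1 / 2) * k) with (INR M * k - k / 2) in Hclosed
    by (rewrite minus_INR by lia; simpl INR; field).
  rewrite cos_minus, Hcos in Hclosed. rewrite Hf. lra.
Qed.

Lemma cot_lower (y : R) : 0 < y -> y <= PI / 3 -> / (2 * y) <= cos y / sin y.
Proof.
  intros Hy0 Hy1. pose proof PI_RGT_0.
  pose proof (sin_lt_x y Hy0) as Hsy.
  assert (Hs : 0 < sin y) by (apply sin_gt_0; lra).
  assert (Hc : 1 / 2 <= cos y) by (rewrite <- cos_PI3; apply cos_decr_1; lra).
  apply (Rmult_le_reg_r (2 * y * sin y)); [nra|].
  replace (/ (2 * y) * (2 * y * sin y)) with (sin y) by (field; lra).
  replace (cos y / sin y * (2 * y * sin y)) with (2 * y * cos y) by (field; lra).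
  nra.
Qed.

Lemma fN_flat_lower (M n : nat) : (2 * n + 1 <= M)%nat ->
  INR (2 * M) / (8 * (INR n + 1)) <= Rabs (fN 0 (2 * M) (kn (2 * M) n)).
Proof.
  intros Hn. set (N := (2 * M)%nat). set (y := kn N n / 2).
  pose proof PI_RGT_0. pose proof PI_4. pose proof (pos_INR n).
  assert (HN : INR N = 2 * INR M) by (unfold N; rewrite mult_INR; reflexivity).
  assert (HnM : 2 * INR n + 1 <= INR M)
    by (replace (2 * INR n + 1) with (INR (2 * n + 1)) by (rewrite plus_INR, mult_INR; reflexivity);
        apply le_INR; exact Hn).
  assert (Hy : y = (2 * INR n + 1) * PI / (2 * INR N)) by (unfold y, kn; field; lra).
  assert (Hy0 : 0 < y) by (rewrite Hy; apply Rdiv_lt_0_compat; nra).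
  assert (Hy1 : y <= PI / 3).
  { rewrite Hy, HN. apply (Rmult_le_reg_r (12 * INR M)); [lra|].
    replace ((2 * INR n + 1) * PI / (2 * (2 * INR M)) * (12 * INR M)) with (3 * (2 * INR n + 1) * PI)
      by (field; lra).
    replace (PI / 3 * (12 * INR M)) with (4 * INR M * PI) by field. nra. }
  assert (Hs : 0 < sin y) by (apply sin_gt_0; lra).
  assert (Hcot : cos y / sin y <= fN 0 N (kn N n)).
  { pose proof (fN_flat_grid M n ltac:(lia)) as Hgrid. fold N y in Hgrid.
    pose proof (SIN_bound (INR M * kn N n)).
    apply (Rmult_le_reg_l (sin y)); [exact Hs|].
    replace (sin y * (cos y / sin y)) with (cos y) by (field; lra). nra. }
  pose proof (cot_lower y Hy0 Hy1).
  assert (Hinv : INR N / (8 * (INR n + 1)) <= / (2 * y)).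
  { rewrite Hy. replace (/ (2 * ((2 * INR n + 1) * PI / (2 * INR N)))) with (INR N / ((2 * INR n + 1) * PI))
      by (field; split; nra).
    unfold Rdiv. apply Rmult_le_compat_l; [apply pos_INR|].
    apply Rinv_le_contravar; nra. }
  eapply Rle_trans; [exact Hinv|]. eapply Rle_trans; [|apply Rle_abs]. lra.
Qed.

Lemma harmonic_ln (K : nat) : ln (INR K + 1) <= sumR (fun n => / (INR n + 1)) K.
Proof.
  replace (ln (INR K + 1)) with (ln (INR K + 1) - ln (INR 0 + 1)) by (simpl; rewrite Rplus_0_l, ln_1; ring).
  rewrite <- (sumR_tele (fun n => ln (INR n + 1))). apply sumR_le.
  intros n _. rewrite S_INR. pose proof (pos_INR n).
  pose proof (ln_le_sub1 ((INR n + 1 + 1) / (INR n + 1)) ltac:(apply Rdiv_lt_0_compat; lra)).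
  unfold Rdiv in H0. rewrite ln_mult, ln_Rinv in H0 by (try apply Rinv_0_lt_compat; lra).
  replace ((INR n + 1 + 1) * / (INR n + 1) - 1) with (/ (INR n + 1)) in H0 by (field; lra).
  lra.
Qed.

Lemma gamma_flat_lower (K : nat) :
  INR (2 * (2 * K)) / 8 * ln (INR K + 1) <= gammaA 0 (2 * (2 * K)).
Proof.
  set (N := (2 * (2 * K))%nat). pose proof (pos_INR N).
  apply Rle_trans with (sumR (fun n => Rabs (fN 0 N (kn N n))) K).
  - apply Rle_trans with (sumR (fun n => INR N / 8 * / (INR n + 1)) K).
    + rewrite sumR_scal. apply Rmult_le_compat_l; [lra | apply harmonic_ln].
    + apply sumR_le. intros n Hn. pose proof (pos_INR n).
      replace (INR N / 8 * / (INR n + 1)) with (INR N / (8 * (INR n + 1))) by (field; lra).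
      apply fN_flat_lower; lia.
  - apply sumR_prefix; [unfold N; lia | intros; apply Rabs_pos].
Qed.

(* gamma_0(N) / N is unbounded: pick K with ln (K + 2) > 8 |B|, N = 4 (K + 1). *)
Lemma gamma_flat_superlinear (B : R) :
  exists K : nat, B * INR (2 * (2 * S K)) < gammaA 0 (2 * (2 * S K)).
Proof.
  destruct (INR_unbounded (exp (8 * Rabs B))) as [K HK]. exists K.
  set (N := (2 * (2 * S K))%nat).
  pose proof (gamma_flat_lower (S K)) as Hflat. fold N in Hflat.
  assert (HNpos : 0 < INR N) by (apply lt_0_INR; unfold N; lia).
  assert (Hln : 8 * Rabs B < ln (INR (S K) + 1)).
  { rewrite <- (ln_exp (8 * Rabs B)). apply ln_increasing; [apply exp_pos|].
    rewrite S_INR. lra. }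
  assert (B * INR N <= Rabs B * INR N) by (apply Rmult_le_compat_r; [lra | apply Rle_abs]).
  assert (Rabs B * INR N < INR N / 8 * ln (INR (S K) + 1)).
  { apply (Rmult_lt_reg_l 8); [lra|].
    replace (8 * (INR N / 8 * ln (INR (S K) + 1))) with (INR N * ln (INR (S K) + 1)) by field.
    nra. }
  lra.
Qed.

Lemma quadratic_sandwich (c C g n T : R) :
  0 <= c -> 0 <= n -> c * n <= g <= C * n ->
  (c / 2) ^ 2 * (T ^ 2 * n ^ 2) <= (g / 2) ^ 2 * T ^ 2 <= (C / 2) ^ 2 * (T ^ 2 * n ^ 2).
Proof.
  intros Hc Hn [Hlo Hhi]. assert (HT : 0 <= T ^ 2) by (rewrite <- Rsqr_pow2; apply Rle_0_sqr).
  assert (Hcn : 0 <= c * n) by (apply Rmult_le_pos; assumption).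
  assert (Hlo2 : (c * n / 2) ^ 2 <= (g / 2) ^ 2) by (apply pow_incr; lra).
  assert (Hhi2 : (g / 2) ^ 2 <= (C * n / 2) ^ 2) by (apply pow_incr; lra).
  split.
  - replace ((c / 2) ^ 2 * (T ^ 2 * n ^ 2)) with ((c * n / 2) ^ 2 * T ^ 2) by field.
    apply Rmult_le_compat_r; assumption.
  - replace ((C / 2) ^ 2 * (T ^ 2 * n ^ 2)) with ((C * n / 2) ^ 2 * T ^ 2) by field.
    apply Rmult_le_compat_r; assumption.
Qed.

Theorem mainTheorem7 :
  (forall alpha : R, 0 < alpha ->
     exists (c C : R) (N0 : nat),
       0 < c /\ c <= C /\
       forall N : nat, Nat.Even N -> (4 <= N)%nat -> (N0 <= N)%nat ->
         (c * INR N <= gammaA alpha N <= C * INR N) /\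
         (forall T : R, 0 < T ->
            (c / 2) ^ 2 * (T ^ 2 * INR N ^ 2) <= I0 alpha N T <=
            (C / 2) ^ 2 * (T ^ 2 * INR N ^ 2)))
  /\
  (* super-Heisenberg scaling at alpha = 0: gamma_0(N)/N is unbounded *)
  (forall M : R, exists N : nat,
      Nat.Even N /\ (4 <= N)%nat /\ M * INR N < gammaA 0 N).
Proof.
  split.
  - intros a Ha. assert (0 < 8 / a) by (apply Rdiv_lt_0_compat; lra).
    exists 1, (4 + 8 / a), 0%nat. split; [lra | split; [lra|]].
    intros N [M ->] HN _.
    assert (Hgamma : 1 * INR (2 * M) <= gammaA a (2 * M) <= (4 + 8 / a) * INR (2 * M)).
    { pose proof (gamma_lower a M ltac:(lia)). pose proof (gamma_upper a M Ha ltac:(lia)). lra. }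
    split; [exact Hgamma|]. intros T _. unfold I0.
    apply quadratic_sandwich; [lra | apply pos_INR | exact Hgamma].
  - intros B. destruct (gamma_flat_superlinear B) as [K HK].
    exists (2 * (2 * S K))%nat. split; [exists (2 * S K)%nat; reflexivity | split; [lia | exact HK]].
Qed.
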